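(* Fix $p\in[0,\infty]$, a dynamic monetary risk measure $(R_t)_{t=0}^{T-1}$, a dynamic monetary utility function $(U_t)_{t=0}^{T-1}$, $\eta_t\in L^0(\mathcal{F}_t)$ with $\eta_t>0$, and $W_t$ as in the context. For $t\in\{1,\dots,T\}$ define $\phi_{t,T}:\mathcal{R}^p_{t,T}\to L^p(\mathcal{F}_t)$ by $$\phi_{t,T}(Y):=-W_t\circ\dots\circ W_{T-1}(-Y_T)$$ (for $t=T$ the empty composition is the identity). Then each $\phi_{t,T}$ satisfies: $\phi_{t,T}(0)=0$; $\phi_{t,T}(Y)\le\phi_{t,T}(\widetilde Y)$ for all $Y,\widetilde Y\in\mathcal{R}^p_{t,T}$ with $Y\le\widetilde Y$ (componentwise); and $\phi_{t,T}(Y+m1_{[t,T]})=\phi_{t,T}(Y)+m$ for all $Y\in\mathcal{R}^p_{t,T}$ and $m\in L^p(\mathcal{F}_t)$. Moreover, $(\phi_{t,T})_{t=1}^T$ is time-consistent in the sense that $$\phi_{t,T}(Y)=\phi_{t,T}\big(Y1_{[t,u)}+\phi_{u,T}(Y)1_{[u,T]}\big)$$ for every $t\le u\le T$ and all $Y\in\mathcal{R}^p_{t,T}$.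
   Context: Let $T\ge 1$ and $(\Omega,\mathcal{F},\mathbb{F},\mathbb{P})$ a filtered probability space with $\mathbb{F}=(\mathcal{F}_t)_{t=0}^T$, $\{\emptyset,\Omega\}=\mathcal{F}_0\subseteq\dots\subseteq\mathcal{F}_T=\mathcal{F}$. $L^0(\mathcal{F}_t)$: real $\mathcal{F}_t$-measurable random variables; $L^p(\mathcal{F}_t)$ ($p\in(0,\infty)$): those with $\mathbb{E}|Y|^p<\infty$; $L^\infty(\mathcal{F}_t)$: essentially bounded ones; $L^p_+$: nonnegative elements. (In)equalities are a.s.; $x_+=\max(x,0)$. A dynamic monetary risk measure: maps $R_t:L^p(\mathcal{F}_{t+1})\to L^p(\mathcal{F}_t)$, $t=0,\dots,T-1$, with $R_t(Y+\lambda)=R_t(Y)-\lambda$ ($\lambda\in L^p(\mathcal{F}_t)$), $Y\le\widetilde Y\Rightarrow R_t(Y)\ge R_t(\widetilde Y)$, $R_t(cY)=cR_t(Y)$ ($c\in L^p_+(\mathcal{F}_t)$). A dynamic monetary utility function: maps $U_t:L^p(\mathcal{F}_{t+1})\to L^p(\mathcal{F}_t)$ with $U_t(Y+\lambda)=U_t(Y)+\lambda$, $Y\le\widetilde Y\Rightarrow U_t(Y)\le U_t(\widetilde Y)$, $U_t(cY)=cU_t(Y)$. $W_t(Y):=R_t(-Y)-\frac{1}{1+\eta_t}U_t((R_t(-Y)-Y)_+)$ for $Y\in L^p(\mathcal{F}_{t+1})$. $\mathcal{R}^p_{1,T}$ is the space of $\mathbb{F}$-adapted processes $(Y_s)_{s=1}^T$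 with $Y_s\in L^p(\mathcal{F}_s)$. For $1\le u\le v\le T$, $\pi_{u,v}:\mathcal{R}^p_{1,T}\to\mathcal{R}^p_{1,T}$ is $\pi_{u,v}(Y)_s:=1_{u\le s}Y_{s\wedge v}$, and $\mathcal{R}^p_{u,v}:=\pi_{u,v}\mathcal{R}^p_{1,T}$. For a process $Y$ and an interval $I$, $Y1_I$ is the process $s\mapsto 1_{s\in I}Y_s$, and for a random variable $m$, $m1_I$ is the process $s\mapsto 1_{s\in I}m$. *)

From HB Require Import structures.
From mathcomp Require Import all_boot all_order all_algebra.
From mathcomp Require Import all_classical all_reals all_analysis.
Set Implicit Arguments. Unset Strict Implicit. Unset Printing Implicit Defensive.
Import Order.TTheory GRing.Theory Num.Theory.
Local Open Scope classical_set_scope.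
Local Open Scope ring_scope.

Section Defs.
Context (d : measure_display) (Omega : measurableType d) (R : realType)
        (P : probability Omega R).

Definition G_meas (G : set (set Omega)) (Y : Omega -> R) : Prop :=
  forall B : set R, measurable B -> G (Y @^-1` B).

Definition is_filtration (T : nat) (F : nat -> set (set Omega)) : Prop :=
  [/\ forall t, (t <= T)%N -> sigma_algebra setT (F t),
      F 0%N = [set set0; setT],
      (forall s t, (s <= t)%N -> (t <= T)%N -> F s `<=` F t) &
      F T = measurable].

(* Y in L^p(G), p in [0, +oo]: p = 0 gives L^0, p = +oo essentially bounded. *)
Definition Lp (G : set (set Omega)) (p : \bar R) (Y : Omega -> R) : Prop :=
  G_meas G Y /\
  match p with
  | +oo%E => exists M : R, {ae P, forall w, `|Y w| <= M}
  | EFin r => (0 < r) -> (\int[P]_w (`|Y w| `^ r)%:E < +oo)%E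
  | -oo%E => False
  end.

Definition dyn_risk_measure (T : nat) (F : nat -> set (set Omega)) (p : \bar R)
    (Rm : nat -> (Omega -> R) -> (Omega -> R)) : Prop :=
  forall t, (t < T)%N ->
  [/\ (forall Y, Lp (F t.+1) p Y -> Lp (F t) p (Rm t Y)),
      (forall Y lam, Lp (F t.+1) p Y -> Lp (F t) p lam ->
         {ae P, forall w, Rm t (fun x => Y x + lam x) w = Rm t Y w - lam w}),
      (forall Y Y', Lp (F t.+1) p Y -> Lp (F t.+1) p Y' ->
         {ae P, forall w, Y w <= Y' w} ->
         {ae P, forall w, Rm t Y' w <= Rm t Y w}) &
      (forall Y c, Lp (F t.+1) p Y -> Lp (F t) p c -> {ae P, forall w, 0 <= c w} ->
         Lp (F t.+1) p (fun x => c x * Y x) ->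
         {ae P, forall w, Rm t (fun x => c x * Y x) w = c w * Rm t Y w})].

Definition dyn_utility (T : nat) (F : nat -> set (set Omega)) (p : \bar R)
    (U : nat -> (Omega -> R) -> (Omega -> R)) : Prop :=
  forall t, (t < T)%N ->
  [/\ (forall Y, Lp (F t.+1) p Y -> Lp (F t) p (U t Y)),
      (forall Y lam, Lp (F t.+1) p Y -> Lp (F t) p lam ->
         {ae P, forall w, U t (fun x => Y x + lam x) w = U t Y w + lam w}),
      (forall Y Y', Lp (F t.+1) p Y -> Lp (F t.+1) p Y' ->
         {ae P, forall w, Y w <= Y' w} ->
         {ae P, forall w, U t Y w <= U t Y' w}) &
      (forall Y c, Lp (F t.+1) p Y -> Lp (F t) p c -> {ae P, forall w, 0 <= c w} ->
         Lp (F t.+1) p (fun x => c x * Y x) ->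
         {ae P, forall w, U t (fun x => c x * Y x) w = c w * U t Y w})].

(* processes (Y_s)_{s=1}^T, indexed by nat (values outside 1..T irrelevant) *)
Definition in_Rp (T : nat) (F : nat -> set (set Omega)) (p : \bar R)
    (t : nat) (Y : nat -> Omega -> R) : Prop :=
  forall s, (1 <= s <= T)%N ->
    Lp (F s) p (Y s) /\ ((s < t)%N -> {ae P, forall w, Y s w = 0}).

End Defs.

Definition Wop {Omega : Type} {R : realType}
    (Rm U : nat -> (Omega -> R) -> (Omega -> R)) (eta : nat -> Omega -> R)
    (t : nat) (Y : Omega -> R) : Omega -> R :=
  fun w => Rm t (fun x => - Y x) w
           - (1 + eta t w)^-1 *
             U t (fun x => Num.max (Rm t (fun y => - Y y) x - Y x) 0) w.

Fixpoint Wcomp_aux {Omega : Type} {R : realType}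
    (Rm U : nat -> (Omega -> R) -> (Omega -> R)) (eta : nat -> Omega -> R)
    (k t : nat) (Y : Omega -> R) : Omega -> R :=
  match k with
  | 0%N => Y
  | k'.+1 => Wop Rm U eta t (Wcomp_aux Rm U eta k' t.+1 Y)
  end.

Definition phi {Omega : Type} {R : realType}
    (Rm U : nat -> (Omega -> R) -> (Omega -> R)) (eta : nat -> Omega -> R)
    (T t : nat) (Y : nat -> Omega -> R) : Omega -> R :=
  fun w => - Wcomp_aux Rm U eta (T - t) t (fun x => - Y T x) w.

Definition ind_cc {Omega : Type} {R : realType} (a b : nat) (m : Omega -> R)
  : nat -> Omega -> R := fun s w => if (a <= s <= b)%N then m w else 0.
Definition proc_co {Omega : Type} {R : realType} (a b : nat) (Y : nat -> Omega -> R)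
  : nat -> Omega -> R := fun s w => if (a <= s < b)%N then Y s w else 0.
Definition proc_add {Omega : Type} {R : realType} (Y Z : nat -> Omega -> R)
  : nat -> Omega -> R := fun s w => Y s w + Z s w.

From HB Require Import structures.
From mathcomp Require Import all_boot all_order all_algebra.
From mathcomp Require Import all_classical all_reals all_analysis.
From mathcomp Require Import measurable_realfun.
From mathcomp Require Import ring lra zify.
Import Order.TTheory GRing.Theory Num.Theory.
Set Implicit Arguments. Unset Strict Implicit. Unset Printing Implicit Defensive.
Local Open Scope classical_set_scope.
Local Open Scope ring_scope.

(* Each one-step operator W_t maps L^p(F_{t+1}) into L^p(F_t), vanishes at 0,
   is cash additive for F_t-measurable amounts (R_t is, and the shortfall
   (R_t(-Y) - Y)_+ does not see such amounts) and is monotone (the shortfall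
   term can grow by at most the growth of R_t(-Y), and it is discounted by
   (1 + eta_t)^-1 <= 1).  These properties survive composition, so they hold for
   W_t o ... o W_{T-1}, which gives the first three claims.  Such a map fixes
   every F_t-measurable Z, as W(Z) = W(0 + Z) = W(0) + Z.  Hence
   W_u o ... o W_{T-1} fixes the F_u-measurable -phi_{u,T}(Y), and applying
   W_t o ... o W_{u-1} to it yields both sides of the time-consistency identity. *)

Lemma measurable_inv (R : realType) : measurable_fun setT (@GRing.inv R).
Proof.
have -> : [set: R] = ~` [set 0] `|` [set 0] by rewrite setUC setUCr.
apply/measurable_funU => //; first exact: measurableC.
split; last exact: measurable_fun_set1.
apply: open_continuous_measurable_fun.
  by rewrite openC; apply: compact_closed; [exact: Rhausdorff|exact: compact_set1].
by move=> x; rewrite inE => /eqP x0; exact: inv_continuous.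
Qed.

Lemma powR_normD_le (R : realType) (r y z : R) : 0 <= r ->
  `|y + z| `^ r <= 2 `^ r * (`|y| `^ r + `|z| `^ r).
Proof.
move=> r0; wlog yz : y z / `|y| <= `|z|.
  move=> h; have [|/ltW] := leP `|y| `|z|; first exact: h.
  by rewrite addrC [`|y| `^ r + _]addrC; exact: h.
have yz2 : `|y + z| <= 2 * `|z|.
  by apply: le_trans (ler_normD _ _) _; rewrite mulr2n mulrDl mul1r lerD2r.
apply: le_trans (ge0_ler_powR r0 _ _ yz2) _; rewrite ?nnegrE ?mulr_ge0 //.
by rewrite powRM // ler_wpM2l ?powR_ge0 // lerDr powR_ge0.
Qed.

Lemma max0D_le (R : realDomainType) (x e : R) : 0 <= e ->
  Num.max (x + e) 0 <= Num.max x 0 + e.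
Proof.
move=> e0; rewrite ge_max; apply/andP; split.
  by rewrite lerD2r le_max lexx.
by rewrite addr_ge0 // le_max lexx orbT.
Qed.

Section SubSigmaMeasurability.
Context d (Omega : measurableType d) (R : realType).
Implicit Types (G : set (set Omega)) (Y Z : Omega -> R).

Lemma G_measE G Y : sigma_algebra setT G ->
  G_meas G Y <-> measurable_fun setT (Y : g_sigma_algebraType G -> R).
Proof.
move=> sG; split => [h _ B mB | h B mB].
- by rewrite setTI measurable_g_measurableTypeE //; exact: h.
- by have := h measurableT B mB; rewrite setTI measurable_g_measurableTypeE.
Qed.

Lemma G_meas_sub G G' Y : G `<=` G' -> G_meas G Y -> G_meas G' Y.
Proof. by move=> GG' mY B mB; apply/GG'/mY. Qed.

Lemma G_meas_measurable G Y : G `<=` measurable -> G_meas G Y ->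
  measurable_fun setT Y.
Proof. by move=> GM mY _ B mB; rewrite setTI; apply/GM/mY. Qed.

Variables (G : set (set Omega)) (sG : sigma_algebra setT G).

Lemma G_meas_cst (c : R) : G_meas G (fun _ => c).
Proof. by apply/G_measE. Qed.

Lemma G_measN Y : G_meas G Y -> G_meas G (fun w => - Y w).
Proof. by rewrite !G_measE // => mY; exact: measurable_funN. Qed.

Lemma G_measD Y Z : G_meas G Y -> G_meas G Z -> G_meas G (fun w => Y w + Z w).
Proof. by rewrite !G_measE // => mY mZ; exact: measurable_funD. Qed.

Lemma G_measM Y Z : G_meas G Y -> G_meas G Z -> G_meas G (fun w => Y w * Z w).
Proof. by rewrite !G_measE // => mY mZ; exact: measurable_funM. Qed.

Lemma G_measV Y : G_meas G Y -> G_meas G (fun w => (Y w)^-1).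
Proof.
by rewrite !G_measE // => mY; exact: measurableT_comp (@measurable_inv R) mY.
Qed.

Lemma G_meas_max0 Y : G_meas G Y -> G_meas G (fun w => Num.max (Y w) 0).
Proof. by rewrite !G_measE // => mY; exact: measurable_maxr. Qed.

End SubSigmaMeasurability.

Section LpSpaces.
Context d (Omega : measurableType d) (R : realType) (P : probability Omega R).
Implicit Types (G : set (set Omega)) (p : \bar R) (Y Z c : Omega -> R).

Lemma measurable_normr_powR Y (r : R) : measurable_fun setT Y ->
  measurable_fun setT (fun w => `|Y w| `^ r).
Proof.
move=> mY; change (measurable_fun setT ((@powR R ^~ r) \o (@Num.norm R R \o Y))).
apply: measurableT_comp (measurable_powR r) _.
by apply: measurableT_comp => //; exact: normr_measurable.
Qed.

Lemma integral_lty_ae_le Y Z : measurable_fun setT Y -> measurable_fun setT Z ->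
  (forall w, 0 <= Y w) -> (forall w, 0 <= Z w) -> {ae P, forall w, Y w <= Z w} ->
  (\int[P]_w (Z w)%:E < +oo)%E -> (\int[P]_w (Y w)%:E < +oo)%E.
Proof.
move=> mY mZ Y0 Z0 YZ; apply: le_lt_trans; apply: ae_ge0_le_integral => //.
- by move=> w _; rewrite lee_fin.
- exact/measurable_EFinP.
- by move=> w _; rewrite lee_fin.
- exact/measurable_EFinP.
- by move: YZ; apply: filterS => w YZw _; rewrite lee_fin.
Qed.

Lemma Lp_le G p Y Z : G `<=` measurable -> G_meas G Y ->
  {ae P, forall w, `|Y w| <= `|Z w|} -> Lp P G p Z -> Lp P G p Y.
Proof.
move=> GM mY YZ [mZ LpZ]; split => //.
have [mY' mZ'] := (G_meas_measurable GM mY, G_meas_measurable GM mZ).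
case: p LpZ => [r intZ r0| [M ZM] |//].
- apply: integral_lty_ae_le (intZ r0); try exact: measurable_normr_powR.
  + by move=> w; exact: powR_ge0.
  + by move=> w; exact: powR_ge0.
  move: YZ; apply: filterS => w YZw.
  by apply: (ge0_ler_powR (ltW r0)) YZw; rewrite nnegrE.
- by exists M; move: YZ ZM; apply: filterS2 => w; exact: le_trans.
Qed.

Lemma Lp_sub G G' p Y : G `<=` G' -> Lp P G p Y -> Lp P G' p Y.
Proof. by move=> GG' [mY LpY]; split => //; exact: G_meas_sub mY. Qed.

Variables (G : set (set Omega)) (sG : sigma_algebra setT G) (GM : G `<=` measurable).
Variables (p : \bar R) (p0 : (0 <= p)%E).

Lemma Lp0 : Lp P G p (fun _ => 0).
Proof.
split; first exact: G_meas_cst.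
case: p p0 => [r _ r0| _ |//].
- under eq_integral do rewrite normr0 powR0 ?gt_eqF //.
  by rewrite integral0 ltry.
- by exists 0; apply: aeW => w; rewrite normr0.
Qed.

Lemma LpN Y : Lp P G p Y -> Lp P G p (fun w => - Y w).
Proof.
move=> LpY; apply: (Lp_le GM (G_measN sG LpY.1) _ LpY).
by apply: aeW => w; rewrite normrN.
Qed.

Lemma Lp_max0 Y : Lp P G p Y -> Lp P G p (fun w => Num.max (Y w) 0).
Proof.
move=> LpY; apply: (Lp_le GM (G_meas_max0 sG LpY.1) _ LpY).
apply: aeW => w; have [Y0|Y0] := leP (Y w) 0; last by [].
by rewrite normr0 normr_ge0.
Qed.

Lemma LpM_le1 c Y : G_meas G c -> {ae P, forall w, `|c w| <= 1} ->
  Lp P G p Y -> Lp P G p (fun w => c w * Y w).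
Proof.
move=> mc c1 LpY; apply: (Lp_le GM (G_measM sG mc LpY.1) _ LpY).
by move: c1; apply: filterS => w c1; rewrite normrM ler_piMl.
Qed.

Lemma LpD Y Z : Lp P G p Y -> Lp P G p Z -> Lp P G p (fun w => Y w + Z w).
Proof.
move=> [mY LpY] [mZ LpZ]; split; first exact: G_measD.
have [mY' mZ'] := (G_meas_measurable GM mY, G_meas_measurable GM mZ).
case: p p0 LpY LpZ => [r _ intY intZ r0| _ [M1 YM1] [M2 ZM2] |//]; last first.
  exists (M1 + M2); move: YM1 ZM2; apply: filterS2 => w YM1 ZM2.
  exact: le_trans (ler_normD _ _) (lerD YM1 ZM2).
have mpow := measurable_normr_powR r.
apply: (@integral_lty_ae_le _ (fun w => 2 `^ r * (`|Y w| `^ r + `|Z w| `^ r))).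
- exact/mpow/measurable_funD.
- by apply: measurable_funM => //; exact: measurable_funD (mpow _ _) (mpow _ _).
- by move=> w; exact: powR_ge0.
- by move=> w; rewrite mulr_ge0 ?addr_ge0 ?powR_ge0.
- by apply: aeW => w; exact: powR_normD_le (ltW r0).
under eq_integral do rewrite EFinM EFinD.
rewrite ge0_integralZl_EFin ?powR_ge0 //; last 2 first.
- by move=> w _; rewrite adde_ge0 // lee_fin powR_ge0.
- by apply: emeasurable_funD; apply/measurable_EFinP; exact: mpow.
rewrite ge0_integralD //; try by apply/measurable_EFinP; exact: mpow.
apply: lte_mul_pinfty; rewrite ?lee_fin ?powR_ge0 //.
exact: lte_add_pinfty (intY r0) (intZ r0).
Qed.

End LpSpaces.

Section MonetaryMaps.
Context d (Omega : measurableType d) (R : realType) (P : probability Omega R).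
Implicit Types (G : set (set Omega)) (p : \bar R) (Y Z m : Omega -> R).
Implicit Types (V : (Omega -> R) -> Omega -> R).

Lemma mono_ae_eq (A : (Omega -> R) -> Prop) V :
  (forall Y Y', A Y -> A Y' -> {ae P, forall w, Y w <= Y' w} ->
     {ae P, forall w, V Y w <= V Y' w}) ->
  forall Y Y', A Y -> A Y' -> {ae P, forall w, Y w = Y' w} ->
    {ae P, forall w, V Y w = V Y' w}.
Proof.
move=> Vmono Y Y' AY AY' YY'.
have [YY'le Y'Yle] : {ae P, forall w, Y w <= Y' w} /\ {ae P, forall w, Y' w <= Y w}.
  by split; move: YY'; apply: filterS => w ->.
move: (Vmono _ _ AY AY' YY'le) (Vmono _ _ AY' AY Y'Yle); apply: filterS2 => w le1 le2.
by apply/eqP; rewrite eq_le le1 le2.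
Qed.

Lemma ae_zero_of_homogeneous G G' p V :
  Lp P G p (fun _ => 0) -> Lp P G' p (fun _ => 0) ->
  (forall Y c, Lp P G p Y -> Lp P G' p c -> {ae P, forall w, 0 <= c w} ->
     Lp P G p (fun x => c x * Y x) ->
     {ae P, forall w, V (fun x => c x * Y x) w = c w * V Y w}) ->
  {ae P, forall w, V (fun _ => 0) w = 0}.
Proof.
move=> Lp0G Lp0G' Vhomo.
have e0 : (fun x : Omega => (0 : R) * 0) = (fun _ => 0).
  by apply: funext => x; rewrite mulr0.
have := Vhomo _ _ Lp0G Lp0G' (aeW P (fun _ => lexx 0)).
by rewrite e0 => /(_ Lp0G); apply: filterS => w ->; rewrite mul0r.
Qed.

Definition monetary_map G G' p V : Prop :=
  [/\ forall Y, Lp P G p Y -> Lp P G' p (V Y),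
      forall Y Y', Lp P G p Y -> Lp P G p Y' -> {ae P, forall w, Y w <= Y' w} ->
        {ae P, forall w, V Y w <= V Y' w},
      forall Y m, Lp P G p Y -> Lp P G' p m ->
        {ae P, forall w, V (fun x => Y x + m x) w = V Y w + m w} &
      {ae P, forall w, V (fun _ => 0) w = 0}].

Lemma monetary_map_Lp G G' p V Y : monetary_map G G' p V ->
  Lp P G p Y -> Lp P G' p (V Y).
Proof. by case=> + _ _ _; apply. Qed.

Lemma monetary_map_id G p : monetary_map G G p id.
Proof. by split => // [Y Y' _ _ //|]; apply: aeW. Qed.

Lemma monetary_map_ae_eq G G' p V Y Y' : monetary_map G G' p V ->
  Lp P G p Y -> Lp P G p Y' -> {ae P, forall w, Y w = Y' w} ->
  {ae P, forall w, V Y w = V Y' w}.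
Proof. by case=> _ Vmono _ _; exact: (@mono_ae_eq (Lp P G p)). Qed.

Lemma monetary_map_fix G G' p V Z : monetary_map G G' p V ->
  Lp P G p (fun _ => 0) -> Lp P G' p Z -> {ae P, forall w, V Z w = Z w}.
Proof.
case=> _ _ Vcash V0 Lp0 LpZ.
have -> : Z = (fun x => (fun _ => 0) x + Z x) by apply: funext => x; rewrite add0r.
by move: (Vcash _ _ Lp0 LpZ) V0; apply: filterS2 => w -> ->; rewrite add0r.
Qed.

End MonetaryMaps.

Section RecursiveValuation.
Context d (Omega : measurableType d) (R : realType) (P : probability Omega R).
Variables (T : nat) (F : nat -> set (set Omega)) (p : \bar R).
Variables (Rm U : nat -> (Omega -> R) -> (Omega -> R)) (eta : nat -> Omega -> R).
Hypotheses (hF : is_filtration T F) (p0 : (0 <= p)%E).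
Hypotheses (hR : dyn_risk_measure P T F p Rm) (hU : dyn_utility P T F p U).
Hypothesis heta : forall t, (t < T)%N ->
  G_meas (F t) (eta t) /\ {ae P, forall w, 0 < eta t w}.
Implicit Types (Y Z m : Omega -> R).

Local Notation W := (Wop Rm U eta).
Local Notation Wc := (Wcomp_aux Rm U eta).

Lemma filtration_sigma s : (s <= T)%N -> sigma_algebra setT (F s).
Proof. by case: hF => + _ _ _; apply. Qed.

Lemma filtration_measurable s : (s <= T)%N -> F s `<=` measurable.
Proof. by case: hF => _ _ Fmono FT sT; rewrite -FT; exact: Fmono. Qed.

Lemma Lp_filtration_le s u Y : (s <= u)%N -> (u <= T)%N ->
  Lp P (F s) p Y -> Lp P (F u) p Y.
Proof. by case: hF => _ _ Fmono _ su uT; apply: Lp_sub; exact: Fmono. Qed.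

Section AtTime.
Variables (s : nat) (sT : (s <= T)%N).

Lemma Lp_filtration0 : Lp P (F s) p (fun _ => 0).
Proof. exact: (Lp0 P (filtration_sigma sT) p0). Qed.

Lemma Lp_filtrationN Y : Lp P (F s) p Y -> Lp P (F s) p (fun w => - Y w).
Proof. exact: (LpN (filtration_sigma sT) (filtration_measurable sT)). Qed.

Lemma Lp_filtrationD Y Z : Lp P (F s) p Y -> Lp P (F s) p Z ->
  Lp P (F s) p (fun w => Y w + Z w).
Proof. exact: (LpD (filtration_sigma sT) (filtration_measurable sT) p0). Qed.

End AtTime.

Lemma Lp_shortfall t a Y : (t < T)%N -> Lp P (F t) p a -> Lp P (F t.+1) p Y ->
  Lp P (F t.+1) p (fun w => Num.max (a w - Y w) 0).
Proof.
move=> tT Lpa LpY; apply: (Lp_max0 (filtration_sigma tT) (filtration_measurable tT)).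
apply: Lp_filtrationD => //; last exact: Lp_filtrationN.
exact: Lp_filtration_le (leqnSn t) tT Lpa.
Qed.

Lemma discount_ge0_le1 t : (t < T)%N ->
  {ae P, forall w, 0 <= (1 + eta t w)^-1 <= 1}.
Proof.
move=> tT; move: (heta tT).2; apply: filterS => w eta0.
have eta1 : 1 <= 1 + eta t w by rewrite lerDl ltW.
by rewrite invr_ge0 invf_le1 ?(lt_le_trans ltr01) ?(le_trans ler01).
Qed.

Lemma W_Lp t Y : (t < T)%N -> Lp P (F t.+1) p Y -> Lp P (F t) p (W t Y).
Proof.
move=> tT LpY; have tT' := ltnW tT.
have [RLp _ _ _] := hR tT; have [ULp _ _ _] := hU tT.
have LpR := RLp _ (Lp_filtrationN tT LpY).
have LpU := ULp _ (Lp_shortfall tT LpR LpY).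
have discount_meas : G_meas (F t) (fun w => (1 + eta t w)^-1).
  have sF := filtration_sigma tT'.
  exact/(G_measV sF)/(G_measD sF (G_meas_cst _ _) (heta tT).1).
apply: Lp_filtrationD LpR (Lp_filtrationN tT' _) => //.
apply: (LpM_le1 (filtration_sigma tT') (filtration_measurable tT')) LpU => //.
by move: (discount_ge0_le1 tT); apply: filterS => w /andP[c0 c1]; rewrite ger0_norm.
Qed.

Lemma U_ae_eq t Y Y' : (t < T)%N -> Lp P (F t.+1) p Y -> Lp P (F t.+1) p Y' ->
  {ae P, forall w, Y w = Y' w} -> {ae P, forall w, U t Y w = U t Y' w}.
Proof. by move=> tT; case: (hU tT) => _ _ Umono _; exact: (mono_ae_eq Umono). Qed.

Lemma U_shortfall_le t a a' Y Y' : (t < T)%N ->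
  Lp P (F t) p a -> Lp P (F t) p a' -> Lp P (F t.+1) p Y -> Lp P (F t.+1) p Y' ->
  {ae P, forall w, a w <= a' w} -> {ae P, forall w, Y w <= Y' w} ->
  {ae P, forall w, U t (fun x => Num.max (a' x - Y' x) 0) w <=
                   U t (fun x => Num.max (a x - Y x) 0) w + (a' w - a w)}.
Proof.
move=> tT Lpa Lpa' LpY LpY' aa' YY'; have [_ Ucash Umono _] := hU tT.
have Lpda : Lp P (F t) p (fun w => a' w - a w).
  exact: (Lp_filtrationD (ltnW tT) Lpa' (Lp_filtrationN (ltnW tT) Lpa)).
have Lpda1 := Lp_filtration_le (leqnSn t) tT Lpda.
have le_add : {ae P, forall w, U t (fun x => Num.max (a' x - Y' x) 0) w <=
    U t (fun x => Num.max (a x - Y' x) 0 + (a' x - a x)) w}.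
  apply: Umono; first exact: (Lp_shortfall tT Lpa' LpY').
    exact: (Lp_filtrationD tT (Lp_shortfall tT Lpa LpY') Lpda1).
  move: aa'; apply: filterS => w aa'w.
  have -> : a' w - Y' w = a w - Y' w + (a' w - a w) by ring.
  by apply: max0D_le; rewrite subr_ge0.
have le_Y : {ae P, forall w, U t (fun x => Num.max (a x - Y' x) 0) w <=
    U t (fun x => Num.max (a x - Y x) 0) w}.
  apply: Umono; [exact: (Lp_shortfall tT Lpa LpY')|exact: (Lp_shortfall tT Lpa LpY)|].
  by move: YY'; apply: filterS => w YY'w; rewrite le_max2 // lerD2l lerN2.
move: le_add le_Y (Ucash _ _ (Lp_shortfall tT Lpa LpY') Lpda).
by apply: filterS3 => w le1 le2 eq3; apply: le_trans le1 _; rewrite eq3 lerD2r.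
Qed.

(* With [c := (1 + eta t)^-1] in [[0, 1]], [U_shortfall_le] bounds
   [W t Y' - W t Y] from below by [(1 - c) (a' - a) >= 0]. *)
Lemma W_mono t Y Y' : (t < T)%N -> Lp P (F t.+1) p Y -> Lp P (F t.+1) p Y' ->
  {ae P, forall w, Y w <= Y' w} -> {ae P, forall w, W t Y w <= W t Y' w}.
Proof.
move=> tT LpY LpY' YY'; have [RLp _ Rmono _] := hR tT.
pose a := Rm t (fun x => - Y x); pose a' := Rm t (fun x => - Y' x).
have Lpa : Lp P (F t) p a := RLp _ (Lp_filtrationN tT LpY).
have Lpa' : Lp P (F t) p a' := RLp _ (Lp_filtrationN tT LpY').
have aa' : {ae P, forall w, a w <= a' w}.
  apply: Rmono; try exact: Lp_filtrationN.
  by move: YY'; apply: filterS => w; rewrite lerN2.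
move: (discount_ge0_le1 tT) aa' (U_shortfall_le tT Lpa Lpa' LpY LpY' aa' YY').
by apply: filterS3 => w /andP[c0 c1] aa'w shw; rewrite /Wop -/a -/a'; nra.
Qed.

Lemma W_cash t Y m : (t < T)%N -> Lp P (F t.+1) p Y -> Lp P (F t) p m ->
  {ae P, forall w, W t (fun x => Y x + m x) w = W t Y w + m w}.
Proof.
move=> tT LpY Lpm; have [RLp Rcash _ _] := hR tT.
have LpYm := Lp_filtrationD tT LpY (Lp_filtration_le (leqnSn t) tT Lpm).
have Rcash' : {ae P, forall w,
    Rm t (fun x => - (Y x + m x)) w = Rm t (fun x => - Y x) w + m w}.
  have -> : (fun x => - (Y x + m x)) = (fun x => - Y x + - m x).
    by apply: funext => x; rewrite opprD.
  move: (Rcash _ _ (Lp_filtrationN tT LpY) (Lp_filtrationN (ltnW tT) Lpm)).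
  by apply: filterS => w ->; rewrite opprK.
have Ushortfall : {ae P, forall w,
    U t (fun x => Num.max (Rm t (fun y => - (Y y + m y)) x - (Y x + m x)) 0) w =
    U t (fun x => Num.max (Rm t (fun y => - Y y) x - Y x) 0) w}.
  apply: (U_ae_eq tT).
  - exact: (Lp_shortfall tT (RLp _ (Lp_filtrationN tT LpYm)) LpYm).
  - exact: (Lp_shortfall tT (RLp _ (Lp_filtrationN tT LpY)) LpY).
  by move: Rcash'; apply: filterS => w ->; congr (Num.max _ 0); ring.
move: Rcash' Ushortfall; apply: filterS2 => w e1 e2.
by rewrite /Wop e1 e2; ring.
Qed.

Lemma W_zero t : (t < T)%N -> {ae P, forall w, W t (fun _ => 0) w = 0}.
Proof.
move=> tT; have [RLp _ _ Rhomo] := hR tT; have [_ _ _ Uhomo] := hU tT.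
have Lp0 := Lp_filtration0 tT; have Lp0' := Lp_filtration0 (ltnW tT).
have R0 := ae_zero_of_homogeneous Lp0 Lp0' Rhomo.
have U0 := ae_zero_of_homogeneous Lp0 Lp0' Uhomo.
have Ushortfall : {ae P, forall w,
    U t (fun x => Num.max (Rm t (fun _ => 0) x - 0) 0) w = U t (fun _ => 0) w}.
  apply: (U_ae_eq tT (Lp_shortfall tT (RLp _ Lp0) Lp0) Lp0).
  by move: R0; apply: filterS => w ->; rewrite subr0 maxxx.
rewrite /Wop /=; have -> : (fun _ : Omega => - 0 : R) = (fun _ => 0).
  by apply: funext => x; rewrite oppr0.
move: R0 Ushortfall U0; apply: filterS3 => w e1 e2 e3.
by rewrite e1 e2 e3; ring.
Qed.

Lemma W_monetary t : (t < T)%N -> monetary_map P (F t.+1) (F t) p (W t).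
Proof.
by move=> tT; split=> [Y|Y Y'|Y m|]; [apply: W_Lp|apply: W_mono|apply: W_cash|apply: W_zero].
Qed.

Lemma monetary_map_comp s u v V1 V2 : (s <= u)%N -> (u <= v)%N -> (v <= T)%N ->
  monetary_map P (F v) (F u) p V1 -> monetary_map P (F u) (F s) p V2 ->
  monetary_map P (F v) (F s) p (fun Y => V2 (V1 Y)).
Proof.
move=> su uv vT V1m V2m; have uT := leq_trans uv vT.
case: (V1m) (V2m) => [Lp1 mono1 cash1 zero1] [Lp2 mono2 cash2 zero2].
split.
- by move=> Y /Lp1 /Lp2.
- by move=> Y Y' LpY LpY' YY'; apply: mono2; [exact: Lp1|exact: Lp1|exact: mono1].
- move=> Y m LpY Lpm; have Lpm' := Lp_filtration_le su uT Lpm.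
  have LpYm := Lp_filtrationD vT LpY (Lp_filtration_le uv vT Lpm').
  have := monetary_map_ae_eq V2m (Lp1 _ LpYm)
    (Lp_filtrationD uT (Lp1 _ LpY) Lpm') (cash1 _ _ LpY Lpm').
  by move: (cash2 _ _ (Lp1 _ LpY) Lpm); apply: filterS2 => w <- ->.
- have := monetary_map_ae_eq V2m (Lp1 _ (Lp_filtration0 vT)) (Lp_filtration0 uT) zero1.
  by move: zero2; apply: filterS2 => w V20 ->.
Qed.

Lemma Wcomp_monetary k t : (t + k <= T)%N ->
  monetary_map P (F (t + k)) (F t) p (Wc k t).
Proof.
elim: k t => [|k IH] t tkT; first by rewrite addn0; exact: (monetary_map_id P (F t) p).
have tT : (t < T)%N by lia.
rewrite -addSnnS in tkT *.
exact: monetary_map_comp (leqnSn t) (leq_addr k t.+1) tkT (IH _ tkT) (W_monetary tT).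
Qed.

Lemma Wcomp_monetaryB t u : (t <= u)%N -> (u <= T)%N ->
  monetary_map P (F u) (F t) p (Wc (u - t) t).
Proof. by move=> tu uT; have := @Wcomp_monetary (u - t) t; rewrite subnKC //; apply. Qed.

Lemma WcompD a b t Y : Wc (a + b) t Y = Wc a t (Wc b (t + a) Y).
Proof. by elim: a t => [|a IH] t /=; rewrite ?addn0 // IH addSnnS. Qed.

Lemma Wcomp_split t u Y : (t <= u)%N -> (u <= T)%N ->
  Wc (T - t) t Y = Wc (u - t) t (Wc (T - u) u Y).
Proof.
by move=> tu uT; rewrite (_ : T - t = (u - t) + (T - u))%N ?WcompD ?subnKC //; lia.
Qed.

Lemma Wcomp_fix t u Z : (t <= u)%N -> (u <= T)%N -> Lp P (F u) p Z ->
  {ae P, forall w, Wc (T - t) t Z w = Wc (u - t) t Z w}.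
Proof.
move=> tu uT LpZ; rewrite (Wcomp_split _ tu uT).
have WuT := Wcomp_monetaryB uT (leqnn T).
apply: (monetary_map_ae_eq (Wcomp_monetaryB tu uT)) => //.
- exact: (monetary_map_Lp WuT (Lp_filtration_le uT (leqnn T) LpZ)).
- exact: (monetary_map_fix WuT (Lp_filtration0 (leqnn T)) LpZ).
Qed.

Implicit Types X : nat -> Omega -> R.

Lemma in_Rp_terminalN t X : (1 <= t <= T)%N -> in_Rp P T F p t X ->
  Lp P (F T) p (fun x => - X T x).
Proof.
move=> /andP[t1 tT] X_Rp; apply: (Lp_filtrationN (leqnn T)).
by case: (X_Rp T); rewrite ?leqnn ?andbT ?(leq_trans t1 tT).
Qed.

Lemma phi_Lp t X : (1 <= t <= T)%N -> in_Rp P T F p t X ->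
  Lp P (F t) p (phi Rm U eta T t X).
Proof.
move=> tT X_Rp; have tT' : (t <= T)%N by case/andP: tT.
apply: (Lp_filtrationN tT').
exact: (monetary_map_Lp (Wcomp_monetaryB tT' (leqnn T)) (in_Rp_terminalN tT X_Rp)).
Qed.

Lemma phi0 t : (t <= T)%N -> {ae P, forall w, phi Rm U eta T t (fun _ _ => 0) w = 0}.
Proof.
move=> tT; case: (Wcomp_monetaryB tT (leqnn T)) => _ _ _ Wc0.
rewrite /phi; have -> : (fun _ : Omega => - 0 : R) = (fun _ => 0).
  by apply: funext => x; rewrite oppr0.
by move: Wc0; apply: filterS => w ->; rewrite oppr0.
Qed.

Lemma phi_mono t X X' : (1 <= t <= T)%N -> in_Rp P T F p t X -> in_Rp P T F p t X' ->
  {ae P, forall w, X T w <= X' T w} ->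
  {ae P, forall w, phi Rm U eta T t X w <= phi Rm U eta T t X' w}.
Proof.
move=> tT X_Rp X'_Rp XX'; have tT' : (t <= T)%N by case/andP: tT.
case: (Wcomp_monetaryB tT' (leqnn T)) => _ Wmono _ _.
have NXX' : {ae P, forall w, - X' T w <= - X T w}.
  by move: XX'; apply: filterS => w; rewrite lerN2.
move: (Wmono _ _ (in_Rp_terminalN tT X'_Rp) (in_Rp_terminalN tT X_Rp) NXX').
by apply: filterS => w; rewrite /phi lerN2.
Qed.

Lemma phi_cash t X m : (1 <= t <= T)%N -> in_Rp P T F p t X -> Lp P (F t) p m ->
  {ae P, forall w, phi Rm U eta T t (proc_add X (ind_cc t T m)) w
                   = phi Rm U eta T t X w + m w}.
Proof.
move=> tT X_Rp Lpm; have tT' : (t <= T)%N by case/andP: tT.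
case: (Wcomp_monetaryB tT' (leqnn T)) => _ _ Wcash _; rewrite /phi.
have -> : (fun x => - proc_add X (ind_cc t T m) T x) = (fun x => - X T x + - m x).
  by apply: funext => x; rewrite /proc_add /ind_cc tT' leqnn opprD.
move: (Wcash _ _ (in_Rp_terminalN tT X_Rp) (Lp_filtrationN tT' Lpm)).
by apply: filterS => w ->; rewrite opprD opprK.
Qed.

Lemma phi_time_consistent t u X : (1 <= t <= T)%N -> (t <= u <= T)%N ->
  in_Rp P T F p t X ->
  {ae P, forall w, phi Rm U eta T t X w
    = phi Rm U eta T t (proc_add (proc_co t u X) (ind_cc u T (phi Rm U eta T u X))) w}.
Proof.
move=> tT /andP[tu uT] X_Rp.
pose Z := Wc (T - u) u (fun x => - X T x).
have Z_terminal :
    (fun x => - proc_add (proc_co t u X) (ind_cc u T (phi Rm U eta T u X)) T x) = Z.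
  apply: funext => x; rewrite /proc_add /proc_co /ind_cc /phi uT leqnn.
  by rewrite ltnNge uT andbF add0r opprK.
have LpZ : Lp P (F u) p Z.
  exact: (monetary_map_Lp (Wcomp_monetaryB uT (leqnn T)) (in_Rp_terminalN tT X_Rp)).
move: (Wcomp_fix tu uT LpZ); apply: filterS => w WZ.
by rewrite /phi Z_terminal WZ (Wcomp_split _ tu uT).
Qed.

End RecursiveValuation.

Unset Implicit Arguments.

Theorem proposition3 (d : measure_display) (Omega : measurableType d)
  (R : realType) (P : probability Omega R) (T : nat)
  (F : nat -> set (set Omega)) (p : \bar R)
  (Rm U : nat -> (Omega -> R) -> (Omega -> R)) (eta : nat -> Omega -> R) :
  (1 <= T)%N ->
  is_filtration T F ->
  (0 <= p)%E ->
  dyn_risk_measure P T F p Rm ->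
  dyn_utility P T F p U ->
  (forall t, (t < T)%N -> G_meas (F t) (eta t) /\ {ae P, forall w, 0 < eta t w}) ->
  forall t, (1 <= t <= T)%N ->
  [/\ (forall Y, in_Rp P T F p t Y -> Lp P (F t) p (phi Rm U eta T t Y)),
      {ae P, forall w, phi Rm U eta T t (fun _ _ => 0) w = 0},
      (forall Y Y', in_Rp P T F p t Y -> in_Rp P T F p t Y' ->
         (forall s, (1 <= s <= T)%N -> {ae P, forall w, Y s w <= Y' s w}) ->
         {ae P, forall w, phi Rm U eta T t Y w <= phi Rm U eta T t Y' w}),
      (forall Y m, in_Rp P T F p t Y -> Lp P (F t) p m ->
         {ae P, forall w, phi Rm U eta T t (proc_add Y (ind_cc t T m)) w
                          = phi Rm U eta T t Y w + m w}) &
      (forall u Y, (t <= u <= T)%N -> in_Rp P T F p t Y ->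
         {ae P, forall w, phi Rm U eta T t Y w
            = phi Rm U eta T t
                (proc_add (proc_co t u Y) (ind_cc u T (phi Rm U eta T u Y))) w})].
Proof.
move=> T1 hF p0 hR hU heta t tT; have tT' : (t <= T)%N by case/andP: tT.
split.
- by move=> Y; exact: (phi_Lp hF p0 hR hU heta tT).
- exact: (phi0 hF p0 hR hU heta tT').
- move=> Y Y' Y_Rp Y'_Rp YY'; apply: (phi_mono hF p0 hR hU heta tT Y_Rp Y'_Rp).
  by apply: YY'; rewrite T1 leqnn.
- by move=> Y m; exact: (phi_cash hF p0 hR hU heta tT).
- by move=> u Y tuT; exact: (phi_time_consistent hF p0 hR hU heta tT tuT).
Qed.
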